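(* $\mathsf{AP}(R_2,R_3)=\mathsf{AP}(R_3,R_2)=\mathsf{N}$.
   Context: Tuples in $\{0,1\}^4$ are written as strings $abcd$. The relations $R_1,\dots,R_5\subseteq\{0,1\}^4$ are $R_1=\{0000,1000,0100,1100,1010,0110,1001,0101,0011,1011,0111,1111\}$, $R_2=\{0000,1000,0100,1100,1010,0101,0011,1111\}$, $R_3=\{0000,1100,1010,0101,0011,1011,0111,1111\}$, $R_4=\{0000,1100,1010,0101,0011,1111\}$, $R_5=\{0000,1100,1010,0110,1001,0101,0011,1111\}$. For $R,S\subseteq\{0,1\}^4$, a Boolean function $f\colon\{0,1\}^n\to\{0,1\}$ is analogy-preserving relative to $(R,S)$ if for all $\mathbf{a},\mathbf{b},\mathbf{c},\mathbf{d}\in\{0,1\}^n$ with $(a_i,b_i,c_i,d_i)\in R$ for every $i$ and such that $(f(\mathbf{a}),f(\mathbf{b}),f(\mathbf{c}),x)\in S$ for some $x\in\{0,1\}$, we have $(f(\mathbf{a}),f(\mathbf{b}),f(\mathbf{c}),f(\mathbf{d}))\in S$; $\mathsf{AP}(R,S)$ is the set of all such functions of all arities. $\mathsf{N}$ is the set of all Boolean functions (of all arities) that are constant or the negation of a projection. *)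

From mathcomp Require Import all_boot.
Set Implicit Arguments. Unset Strict Implicit. Unset Printing Implicit Defensive.

(* A relation R ⊆ {0,1}^4 is given by the list of its tuples, each tuple
   abcd written as the digit list [:: a; b; c; d]. *)
Definition rel4 := seq (seq nat).

Definition in_rel (R : rel4) (a b c d : bool) : bool :=
  [:: nat_of_bool a; nat_of_bool b; nat_of_bool c; nat_of_bool d] \in R.

Definition R1 : rel4 :=
  [:: [::0;0;0;0]; [::1;0;0;0]; [::0;1;0;0]; [::1;1;0;0]; [::1;0;1;0]; [::0;1;1;0];
      [::1;0;0;1]; [::0;1;0;1]; [::0;0;1;1]; [::1;0;1;1]; [::0;1;1;1]; [::1;1;1;1]].
Definition R2 : rel4 :=
  [:: [::0;0;0;0]; [::1;0;0;0]; [::0;1;0;0]; [::1;1;0;0]; [::1;0;1;0]; [::0;1;0;1];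
      [::0;0;1;1]; [::1;1;1;1]].
Definition R3 : rel4 :=
  [:: [::0;0;0;0]; [::1;1;0;0]; [::1;0;1;0]; [::0;1;0;1]; [::0;0;1;1]; [::1;0;1;1];
      [::0;1;1;1]; [::1;1;1;1]].
Definition R4 : rel4 :=
  [:: [::0;0;0;0]; [::1;1;0;0]; [::1;0;1;0]; [::0;1;0;1]; [::0;0;1;1]; [::1;1;1;1]].
Definition R5 : rel4 :=
  [:: [::0;0;0;0]; [::1;1;0;0]; [::1;0;1;0]; [::0;1;1;0]; [::1;0;0;1]; [::0;1;0;1];
      [::0;0;1;1]; [::1;1;1;1]].

Definition boolfun (n : nat) := ('I_n -> bool) -> bool.

Definition AP (R S : rel4) (n : nat) (f : boolfun n) : Prop :=
  forall a b c d : 'I_n -> bool,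
    (forall i : 'I_n, in_rel R (a i) (b i) (c i) (d i)) ->
    (exists x : bool, in_rel S (f a) (f b) (f c) x) ->
    in_rel S (f a) (f b) (f c) (f d).

Definition inN (n : nat) (f : boolfun n) : Prop :=
  (exists c : bool, forall x, f x = c) \/ (exists i : 'I_n, forall x, f x = ~~ x i).

(* Write Boolean vectors as sets of coordinates.  If f is in AP(R2,R3) and
   f(∅) = 0, then f is constantly 0.  Otherwise the tuples 0000, 0100, 0101
   and 0011 of R2 make the set {x | f x = 1} closed under subsets and under
   disjoint unions, so it is determined by the singletons it contains; and
   two singletons {i}, {j} both outside it are impossible, because
   ({i}, ∅, {i,j}, {j}) is coordinatewise in R2 while (0,1,0,0) is not in R3.
   Hence f is constantly 1 or f = ¬x_i.  Complementing all coordinates swaps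
   R2 and R3, which reduces AP(R3,R2) to AP(R2,R3) via f ↦ ¬f(¬x). *)

From mathcomp Require Import all_boot.

Set Implicit Arguments.
Unset Strict Implicit.
Unset Printing Implicit Defensive.

Lemma AP_extend R S n (f : boolfun n) a b c d : AP R S f ->
  (forall i, in_rel R (a i) (b i) (c i) (d i)) ->
  forall x, in_rel S (f a) (f b) (f c) x -> in_rel S (f a) (f b) (f c) (f d).
Proof. by move=> fAP Rabcd x Sx; apply: fAP => //; exists x. Qed.

(* Inputs are functions, so extensionality of f is not automatic; AP provides it. *)
Lemma AP_ext R S n (f : boolfun n) :
    (forall p, in_rel R p p p p) ->
    (forall p, in_rel S p p p p) -> (forall p, ~~ in_rel S p p p (~~ p)) ->
  AP R S f -> forall x y, x =1 y -> f x = f y.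
Proof.
move=> Rdiag Sdiag Sflip fAP x y exy.
have Rxy i : in_rel R (x i) (x i) (x i) (y i) by rewrite -exy Rdiag.
have := AP_extend fAP Rxy (Sdiag (f x)).
by case: (f x) (f y) (Sflip (f x)) => [] [] // /negP.
Qed.

Lemma inN_AP R S n (f : boolfun n) :
    (forall a b c d, in_rel R a b c d -> in_rel S (~~ a) (~~ b) (~~ c) (~~ d)) ->
    (forall p, in_rel S p p p p) ->
  inN f -> AP R S f.
Proof.
move=> RSnegb Sdiag [[p fp]|[i fi]] a b c d Rabcd _.
  by rewrite !fp.
by rewrite !fi; apply: RSnegb.
Qed.

Lemma in_R3_negb p q r s : in_rel R3 (~~ p) (~~ q) (~~ r) (~~ s) = in_rel R2 p q r s.
Proof. by case: p; case: q; case: r; case: s. Qed.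

Lemma in_R2_negb p q r s : in_rel R2 (~~ p) (~~ q) (~~ r) (~~ s) = in_rel R3 p q r s.
Proof. by case: p; case: q; case: r; case: s. Qed.

Section APR2R3.

Variables (n : nat) (f : boolfun n).
Hypothesis fAP : AP R2 R3 f.

Let empty : 'I_n -> bool := fun _ => false.
Let single (j : 'I_n) : 'I_n -> bool := fun i => i == j.

Lemma AP_R2_R3_const0 : f empty = false -> forall x : 'I_n -> bool, f x = false.
Proof.
move=> f0 x.
have R2x i : in_rel R2 (empty i) (x i) (empty i) (empty i) by case: (x i).
by have := AP_extend fAP R2x (x := f x); rewrite f0; case: (f x) => // /(_ isT).
Qed.

Hypothesis f1 : f empty = true.

Lemma AP_R2_R3_subset (u v : 'I_n -> bool) :
  f u = true -> (forall j, v j -> u j) -> f v = true.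
Proof.
move=> fu vu.
have R2uv i : in_rel R2 (empty i) (u i) (empty i) (v i).
  by case: (u i) (v i) (vu i) => [] [] // /(_ isT).
by have := AP_extend fAP R2uv (x := true); rewrite f1 fu; case: (f v) => // /(_ isT).
Qed.

Lemma AP_R2_R3_union (x b y : 'I_n -> bool) : (forall j, ~~ (b j && y j)) ->
  (forall j, x j = b j || y j) -> f b = true -> f y = true -> f x = true.
Proof.
move=> dby xby fb fy.
have R2byx j : in_rel R2 (empty j) (b j) (y j) (x j).
  by rewrite xby; case: (b j) (y j) (dby j) => [] [].
by have := AP_extend fAP R2byx (x := true); rewrite f1 fb fy; case: (f x) => // /(_ isT).
Qed.

Lemma AP_R2_R3_singletons (x : 'I_n -> bool) :
  (forall j, x j -> f (single j) = true) -> f x = true.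
Proof.
move=> fsx.
pose xk k j := x j && (j < k).
suff fxk k : f (xk k) = true.
  by apply: (AP_R2_R3_subset (fxk n)) => j xj; rewrite /xk xj ltn_ord.
elim: k => [|k IHk].
  by apply: (AP_R2_R3_subset f1) => j; rewrite /xk ltn0 andbF.
pose b j := x j && (nat_of_ord j == k).
have fb : f b = true.
  case: (pickP b) => [j bj|b0]; last by apply: (AP_R2_R3_subset f1) => j; rewrite b0.
  case/andP: bj => xj /eqP jk.
  apply: (AP_R2_R3_subset (fsx j xj)) => i /andP[_ /eqP ik].
  by apply/eqP/val_inj; rewrite /= ik jk.
apply: (AP_R2_R3_union _ _ fb IHk) => j; rewrite /b /xk.
  by case: (x j) => //=; case: eqP => // ->; rewrite ltnn.
by rewrite ltnS leq_eqVlt; case: (x j).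
Qed.

Lemma AP_R2_R3_single0 i (x : 'I_n -> bool) : f (single i) = false -> x i -> f x = false.
Proof.
move=> fi0 xi; apply: negbTE; apply: contraFN fi0 => fx.
by apply: (AP_R2_R3_subset fx) => j /eqP ->.
Qed.

Lemma AP_R2_R3_single0_uniq i j :
  f (single i) = false -> f (single j) = false -> i = j.
Proof.
move=> fi0 fj0; apply/eqP/negPn/negP => ij.
pose c t := (t == i) || (t == j).
have fc0 : f c = false by apply: (AP_R2_R3_single0 fi0); rewrite /c eqxx.
have R2icj t : in_rel R2 (single i t) (empty t) (c t) (single j t).
  rewrite /single /empty /c; case: (eqVneq t i) => [->|_]; first by rewrite (negbTE ij).
  by case: (t == j).
by have := AP_extend fAP R2icj (x := true); rewrite fi0 f1 fc0 fj0 => /(_ isT).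
Qed.

Lemma AP_R2_R3_inN_nonempty : inN f.
Proof.
case: (pickP (fun i => ~~ f (single i))) => [i /negbTE fi0|fs1]; last first.
  by left; exists true => x; apply: AP_R2_R3_singletons => j _; apply/negbFE/fs1.
right; exists i => x; case xi: (x i); first exact: AP_R2_R3_single0 xi.
apply: AP_R2_R3_singletons => j xj; apply: contraFT xi => /negbTE fj0.
by rewrite (AP_R2_R3_single0_uniq fi0 fj0).
Qed.

End APR2R3.

Lemma AP_R2_R3_inN n (f : boolfun n) : AP R2 R3 f -> inN f.
Proof.
move=> fAP; case f0: (f (fun _ => false)); first exact: AP_R2_R3_inN_nonempty.
by left; exists false; apply: AP_R2_R3_const0.
Qed.

Definition dualf n (f : boolfun n) : boolfun n := fun x => ~~ f (fun i => ~~ x i).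

Lemma AP_R3_R2_dualf n (f : boolfun n) : AP R3 R2 f -> AP R2 R3 (dualf f).
Proof.
move=> fAP a b c d R2abcd [x R3x]; rewrite /dualf -in_R2_negb !negbK.
apply: fAP => [i|]; first by rewrite in_R3_negb.
by exists (~~ x); rewrite -in_R3_negb !negbK.
Qed.

Lemma inN_dualf n (f : boolfun n) :
  (forall x y, x =1 y -> f x = f y) -> inN (dualf f) -> inN f.
Proof.
rewrite /dualf => fext [[p fp]|[i fi]].
  left; exists (~~ p) => x; rewrite -(fp (fun i => ~~ x i)) negbK.
  by apply: fext => i; rewrite negbK.
right; exists i => x; rewrite -[RHS]negbK -(fi (fun i => ~~ x i)) negbK.
by apply: fext => j; rewrite negbK.
Qed.

Theorem mainTheorem14 :
  forall (n : nat) (f : boolfun n),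
    (AP R2 R3 f <-> inN f) /\ (AP R3 R2 f <-> inN f).
Proof.
move=> n f; split; split.
- exact: AP_R2_R3_inN.
- by apply: inN_AP => [a b c d|[]]; rewrite ?in_R3_negb.
- move=> fAP; apply: inN_dualf; last exact/AP_R2_R3_inN/AP_R3_R2_dualf.
  by apply: AP_ext fAP => [[]|[]|[]].
- by apply: inN_AP => [a b c d|[]]; rewrite ?in_R2_negb.
Qed.
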